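(* Let $\widehat x=\sum_{m=0}^\infty\sum_{k=0}^{2^m-1}e_{m,k}$ and $y=\sum_{m=0}^\infty\sum_{k=0}^{2^m-1}(-1)^me_{m,k}$ (these belong to $\mathscr X$ and admit the quadratic variation $\langle\widehat x\rangle_t=t=\langle y\rangle_t$ along the dyadic partitions $\mathbb T_n=\{k2^{-n}:k=0,\dots,2^n\}$). Then for all $t\in[0,1]$, $$\lim_{n\to\infty}\langle \widehat x+y\rangle^{2n}_t=\frac43t,\qquad \lim_{n\to\infty}\langle \widehat x+y\rangle^{2n+1}_t=\frac83t,$$ and $$\lim_{n\to\infty}\langle \widehat x,y\rangle^{2n}_t=-\frac13t,\qquad \lim_{n\to\infty}\langle \widehat x,y\rangle^{2n+1}_t=\frac13t.$$ In particular, for $t>0$ the limits of $\langle\widehat x+y\rangle^n_t$ and $\langle\widehat x,y\rangle^n_t$ as $n\to\infty$ do not exist, but $\widehat x+y$ admits different continuous quadratic variations along the two refining sequences $(\mathbb T_{2n})_{n\in\mathbb N}$ and $(\mathbb T_{2n+1})_{n\in\mathbb N}$.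
   Context: The Faber--Schauder functions are $e_{0,0}(t):=(\min\{t,1-t\})^+$ and $e_{m,k}(t):=2^{-m/2}e_{0,0}(2^m t-k)$ for $t\in\mathbb R$, $m\ge1$, $k\in\mathbb Z$. $\mathscr X$ denotes the set of all functions $x\in C[0,1]$ of the form $x=\sum_{m=0}^\infty\sum_{k=0}^{2^m-1}\theta_{m,k}e_{m,k}$ (uniformly convergent series) with $\theta_{m,k}\in\{-1,+1\}$. For $s\in\mathbb T_n$, $s'$ denotes its successor in $\mathbb T_n$ ($s'=\min\{u\in\mathbb T_n:u>s\}$ if $s<1$, $s'=1$ if $s=1$). For $x,z\in C[0,1]$: $\langle x\rangle^n_t:=\sum_{s\in\mathbb T_n,\,s\le t}(x(s')-x(s))^2$ and $\langle x,z\rangle^n_t:=\sum_{s\in\mathbb T_n,\,s\le t}(x(s')-x(s))(z(s')-z(s))$. A function $x$ admits the continuous quadratic variation $\langle x\rangle$ along a refining sequence of partitions $(\mathbb S_n)$ if $\langle x\rangle_t=\lim_n\sum_{s\in\mathbb S_n,s\le t}(x(s')-x(s))^2$ exists for all $t\in[0,1]$ and is continuous in $t$. *)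

From Stdlib Require Import Reals Lra.
From Coquelicot Require Import Coquelicot.
Open Scope R_scope.

Definition e00 (t : R) : R := Rmax 0 (Rmin t (1 - t)).
Definition e (m k : nat) (t : R) : R :=
  / sqrt (2 ^ m) * e00 (2 ^ m * t - INR k).

Definition xhat (t : R) : R :=
  Series (fun m => sum_f_R0 (fun k => e m k t) (2 ^ m - 1)).
Definition yfun (t : R) : R :=
  Series (fun m => sum_f_R0 (fun k => (-1) ^ m * e m k t) (2 ^ m - 1)).

(* The k-th point of T_n = {k 2^-n : k = 0..2^n} and its successor s'
   (with 1' = 1). *)
Definition dpt (n k : nat) : R := INR k / 2 ^ n.
Definition dsucc (n k : nat) : R := INR (Nat.min (S k) (2 ^ n)) / 2 ^ n.

Definition qcov (n : nat) (x z : R -> R) (t : R) : R :=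
  sum_f_R0 (fun k => if Rle_dec (dpt n k) t
                     then (x (dsucc n k) - x (dpt n k)) * (z (dsucc n k) - z (dpt n k))
                     else 0) (2 ^ n).
Definition qv (n : nat) (x : R -> R) (t : R) : R := qcov n x x t.

Definition admits_cqv_along (p : nat -> nat) (x : R -> R) (A : R -> R) : Prop :=
  (forall t, 0 <= t <= 1 -> is_lim_seq (fun n => qv (p n) x t) (A t)) /\
  (forall t, 0 <= t <= 1 -> forall eps, 0 < eps -> exists delta, 0 < delta /\
     forall u, 0 <= u <= 1 -> Rabs (u - t) < delta -> Rabs (A u - A t) < eps).

From Stdlib Require Import Reals Lra Lia ZArith.
From Coquelicot Require Import Coquelicot.
Open Scope R_scope.

(* At the points of T_n only the Faber--Schauder levels m < n contribute to
   f = sum_m c_m sum_k e_{m,k}, and each of them is affine on the intervals of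
   T_n.  So at the midpoint of such an interval f equals the mean of its
   endpoint values plus h_n = c_n 2^(-n/2) / 2, the top of the one level-n tent
   there, and the increments of f along T_(n+1) are (increment along T_n) / 2
   plus or minus h_n.  For two such functions the covariation over [0, 1] then
   obeys v_(n+1) = v_n / 2 + 2^(n+1) h_n h'_n = v_n / 2 + c_n c'_n / 2, and the
   covariation up to t is t v_n up to an error O((3/4)^n).  For x^ and y the
   products c_n c'_n alternate between two values, so v_(2n) and v_(2n+1)
   converge to different limits. *)

Lemma pow2_pos n : 0 < 2 ^ n.
Proof. apply pow_lt; lra. Qed.

Definition sigma (n : nat) : R := / sqrt (2 ^ n).

Lemma sigma_pos n : 0 < sigma n.
Proof. apply Rinv_0_lt_compat, sqrt_lt_R0, pow2_pos. Qed.

Lemma sigma_sq n : sigma n * sigma n = / 2 ^ n.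
Proof.
  unfold sigma. rewrite <- Rinv_mult, sqrt_sqrt; [reflexivity|].
  left; apply pow2_pos.
Qed.

Lemma e00_IZR z : e00 (IZR z) = 0.
Proof.
  unfold e00, Rmax, Rmin.
  destruct (Z.le_gt_cases z 0) as [Hz|Hz].
  - apply IZR_le in Hz. repeat destruct (Rle_dec _ _); lra.
  - assert (IZR z >= 1) by (apply Rle_ge, IZR_le; lia).
    repeat destruct (Rle_dec _ _); lra.
Qed.

Lemma e00_midpoint x y : x <= y ->
  ~ (x < 0 < y) -> ~ (x < 1/2 < y) -> ~ (x < 1 < y) ->
  e00 ((x + y) / 2) = (e00 x + e00 y) / 2.
Proof.
  intros Hxy H0 H1 H2. unfold e00, Rmax, Rmin.
  repeat destruct (Rle_dec _ _); try lra;
  destruct (Rle_lt_dec x 0); destruct (Rle_lt_dec y 0);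
  destruct (Rle_lt_dec x (1/2)); destruct (Rle_lt_dec y (1/2));
  destruct (Rle_lt_dec x 1); destruct (Rle_lt_dec y 1); lra.
Qed.

Lemma INR_not_between a c : ~ (INR a < INR c < INR a + 1).
Proof.
  intros [H1 H2]. apply INR_lt in H1. rewrite <- S_INR in H2. apply INR_lt in H2. lia.
Qed.

Lemma dpt_double n k : dpt (S n) (2 * k) = dpt n k.
Proof. unfold dpt. rewrite mult_INR. simpl. field. apply Rgt_not_eq, pow2_pos. Qed.

Lemma e_dpt_coarse m n l j : (n <= m)%nat -> e m j (dpt n l) = 0.
Proof.
  intro Hnm. unfold e.
  replace (2 ^ m * dpt n l - INR j)
    with (IZR (Z.of_nat (l * 2 ^ (m - n)) - Z.of_nat j)).
  - rewrite e00_IZR. ring.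
  - rewrite minus_IZR, <- !INR_IZR_INZ, mult_INR, pow_INR. unfold dpt.
    replace m with ((m - n) + n)%nat at 2 by lia. rewrite pow_add. simpl INR.
    replace (1 + 1) with 2 by lra. field. apply Rgt_not_eq, pow2_pos.
Qed.

(* A tent of level [m < n] has no kink strictly inside a dyadic interval of
   level [n], so it is affine there. *)
Lemma e_dpt_midpoint m n j k : (m < n)%nat ->
  e m j (dpt (S n) (2 * k + 1)) = (e m j (dpt n k) + e m j (dpt n (S k))) / 2.
Proof.
  intro Hmn. unfold e.
  set (Q := 2 ^ (n - m)). set (B := 2 ^ (n - m - 1)).
  assert (HQ : Q = 2 * B) by (unfold Q, B; rewrite tech_pow_Rmult; f_equal; lia).
  assert (Hn : 2 ^ n = 2 ^ m * Q) by (unfold Q; rewrite <- pow_add; f_equal; lia).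
  assert (HB : 0 < B) by apply pow2_pos.
  assert (Hm : 0 < 2 ^ m) by apply pow2_pos.
  set (x := 2 ^ m * dpt n k - INR j). set (y := 2 ^ m * dpt n (S k) - INR j).
  assert (Hx : x = INR k / Q - INR j) by (unfold x, dpt; rewrite Hn; field; lra).
  assert (Hy : y = (INR k + 1) / Q - INR j)
    by (unfold y, dpt; rewrite S_INR, Hn; field; lra).
  assert (Hmid : 2 ^ m * dpt (S n) (2 * k + 1) - INR j = (x + y) / 2).
  { rewrite Hx, Hy. unfold dpt. rewrite plus_INR, mult_INR. simpl pow. rewrite Hn.
    simpl INR. field. lra. }
  assert (no_kink : forall a : nat, ~ (x < INR a / 2 < y)).
  { rewrite Hx, Hy. intros a [H1 H2].
    apply (INR_not_between k (j * 2 ^ (n - m) + a * 2 ^ (n - m - 1))).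
    rewrite plus_INR, !mult_INR, !pow_INR. replace (INR 2) with 2 by (simpl; lra).
    fold Q B.
    assert (H3 : INR k / Q < INR j + INR a / 2) by lra.
    assert (H4 : INR j + INR a / 2 < (INR k + 1) / Q) by lra.
    apply Rlt_div_l in H3; [|lra]. apply Rlt_div_r in H4; [|lra].
    rewrite HQ in H3, H4. split; nra. }
  rewrite Hmid, e00_midpoint.
  - field. apply Rgt_not_eq, sqrt_lt_R0; lra.
  - rewrite Hx, Hy. unfold Rdiv.
    assert (0 < / Q) by (apply Rinv_0_lt_compat; lra). nra.
  - pose proof (no_kink 0%nat). simpl INR in *. intro; lra.
  - pose proof (no_kink 1%nat). simpl INR in *. intro; lra.
  - pose proof (no_kink 2%nat). simpl INR in *. intro; lra.
Qed.

Lemma e_dpt_peak n j k :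
  e n j (dpt (S n) (2 * k + 1)) = if Nat.eq_dec j k then sigma n / 2 else 0.
Proof.
  unfold e. fold (sigma n).
  replace (2 ^ n * dpt (S n) (2 * k + 1) - INR j) with (INR k - INR j + / 2).
  2:{ unfold dpt. rewrite plus_INR, mult_INR. simpl.
      field. apply Rgt_not_eq, pow2_pos. }
  destruct (Nat.eq_dec j k) as [->|Hne].
  - unfold e00, Rmax, Rmin. repeat destruct (Rle_dec _ _); lra.
  - assert (Hjk : (S j <= k \/ S k <= j)%nat) by lia.
    destruct Hjk as [Hjk|Hjk]; apply le_INR in Hjk; rewrite S_INR in Hjk;
    unfold e00, Rmax, Rmin; repeat destruct (Rle_dec _ _); lra.
Qed.

Fixpoint psum (a : nat -> R) (N : nat) : R :=
  match N with O => 0 | S N => psum a N + a N end.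

Lemma psum_S a N : psum a (S N) = psum a N + a N.
Proof. reflexivity. Qed.

Lemma sum_f_R0_psum a N : sum_f_R0 a N = psum a (S N).
Proof. induction N as [|N IH]; simpl in *; [ring|]. rewrite IH. reflexivity. Qed.

Lemma psum_ext a b N : (forall k, (k < N)%nat -> a k = b k) -> psum a N = psum b N.
Proof.
  induction N as [|N IH]; intro Hab; simpl; [reflexivity|].
  rewrite IH, Hab; [reflexivity|lia|intros; apply Hab; lia].
Qed.

Lemma sum_f_R0_indicator (c : R) k N : (k <= N)%nat ->
  sum_f_R0 (fun j => if Nat.eq_dec j k then c else 0) N = c.
Proof.
  induction N as [|N IH]; intro HkN.
  - replace k with 0%nat by lia. reflexivity.
  - rewrite tech5. destruct (Nat.eq_dec (S N) k) as [<-|Hne].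
    + rewrite sum_eq_R0; [ring|]. intros j Hj. destruct (Nat.eq_dec j (S N)); [lia|easy].
    + rewrite IH by lia. ring.
Qed.

Lemma Series_eventually_zero a N :
  (forall m, (N <= m)%nat -> a m = 0) -> Series a = psum a N.
Proof.
  intro Ha. apply is_series_unique. change (is_lim_seq (sum_n a) (psum a N)).
  apply is_lim_seq_ext_loc with (fun _ => psum a N); [|apply is_lim_seq_const].
  exists N. intros M HM. rewrite sum_n_Reals, sum_f_R0_psum.
  induction HM as [|M HM IH]; simpl psum in *.
  - rewrite (Ha N) by lia. ring.
  - rewrite (Ha (S M)) by lia. rewrite <- IH. ring.
Qed.

Definition schauder_level (c : nat -> R) (m : nat) (t : R) : R :=
  sum_f_R0 (fun j => c m * e m j t) (2 ^ m - 1).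

Definition schauder (c : nat -> R) (t : R) : R := Series (fun m => schauder_level c m t).

Lemma schauder_dpt c n l :
  schauder c (dpt n l) = psum (fun m => schauder_level c m (dpt n l)) n.
Proof.
  apply Series_eventually_zero. intros m Hm. apply sum_eq_R0. intros j _.
  rewrite e_dpt_coarse by exact Hm. ring.
Qed.

Lemma schauder_level_midpoint c m n k : (m < n)%nat ->
  schauder_level c m (dpt (S n) (2 * k + 1))
  = (schauder_level c m (dpt n k) + schauder_level c m (dpt n (S k))) / 2.
Proof.
  intro Hmn. unfold schauder_level, Rdiv.
  rewrite <- plus_sum, (Rmult_comm _ (/ 2)), scal_sum. apply sum_eq. intros j _.
  rewrite e_dpt_midpoint by exact Hmn. field.
Qed.

Lemma schauder_level_peak c n k : (k < 2 ^ n)%nat ->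
  schauder_level c n (dpt (S n) (2 * k + 1)) = c n * sigma n / 2.
Proof.
  intro Hk. unfold schauder_level.
  rewrite (sum_eq _ (fun j => if Nat.eq_dec j k then c n * sigma n / 2 else 0)).
  - apply sum_f_R0_indicator. lia.
  - intros j _. rewrite e_dpt_peak. destruct (Nat.eq_dec j k); field.
Qed.

Definition dyadic_midpoint_law (f : R -> R) (h : nat -> R) : Prop :=
  (forall n k, (k < 2 ^ n)%nat ->
     f (dpt (S n) (2 * k + 1)) = (f (dpt n k) + f (dpt n (S k))) / 2 + h n) /\
  f (dpt 0 1) = f (dpt 0 0).

Definition schauder_defect (c : nat -> R) (n : nat) : R := c n * sigma n / 2.

Lemma schauder_midpoint_law c : dyadic_midpoint_law (schauder c) (schauder_defect c).
Proof.
  split; [|rewrite !schauder_dpt; reflexivity].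
  intros n k Hk. rewrite !schauder_dpt.
  rewrite psum_S.
  rewrite schauder_level_peak by exact Hk. unfold schauder_defect. f_equal.
  assert (Hbelow : forall N, (N <= n)%nat ->
    psum (fun m => schauder_level c m (dpt (S n) (2 * k + 1))) N =
    (psum (fun m => schauder_level c m (dpt n k)) N
     + psum (fun m => schauder_level c m (dpt n (S k))) N) / 2).
  { induction N as [|N IH]; intro HN; [simpl; field|].
    rewrite !psum_S, IH, schauder_level_midpoint by lia. field. }
  apply Hbelow. lia.
Qed.

Lemma dyadic_midpoint_law_ext f f' h h' :
  (forall t, f t = f' t) -> (forall n, h n = h' n) ->
  dyadic_midpoint_law f h -> dyadic_midpoint_law f' h'.
Proof.
  intros Ef Eh [Hmid Hend]. split.
  - intros n k Hk. rewrite <- !Ef, <- Eh. apply Hmid, Hk.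
  - rewrite <- !Ef. exact Hend.
Qed.

Lemma dyadic_midpoint_law_add f g h h' :
  dyadic_midpoint_law f h -> dyadic_midpoint_law g h' ->
  dyadic_midpoint_law (fun t => f t + g t) (fun n => h n + h' n).
Proof.
  intros [Hf0 Hf1] [Hg0 Hg1]. split.
  - intros n k Hk. rewrite Hf0, Hg0 by exact Hk. field.
  - lra.
Qed.

Definition incr (f : R -> R) (n k : nat) : R := f (dpt n (S k)) - f (dpt n k).

Lemma halve_lt k N : (k < 2 * N)%nat ->
  exists j, (j < N)%nat /\ (k = 2 * j \/ k = 2 * j + 1)%nat.
Proof. intro Hk. destruct (Nat.Even_or_Odd k) as [[j Hj]|[j Hj]]; exists j; lia. Qed.

Lemma halve_le K N : (K <= 2 * N)%nat ->
  exists J, (K = 2 * J /\ J <= N)%nat \/ (K = 2 * J + 1 /\ J < N)%nat.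
Proof. intro HK. destruct (Nat.Even_or_Odd K) as [[j Hj]|[j Hj]]; exists j; lia. Qed.

Section Increments.

Variables (f : R -> R) (h : nat -> R).
Hypothesis f_mid : dyadic_midpoint_law f h.

Lemma incr_even n k : (k < 2 ^ n)%nat -> incr f (S n) (2 * k) = incr f n k / 2 + h n.
Proof.
  intro Hk. unfold incr. replace (S (2 * k)) with (2 * k + 1)%nat by lia.
  rewrite (proj1 f_mid) by exact Hk. rewrite dpt_double. field.
Qed.

Lemma incr_odd n k : (k < 2 ^ n)%nat -> incr f (S n) (2 * k + 1) = incr f n k / 2 - h n.
Proof.
  intro Hk. unfold incr. replace (S (2 * k + 1)) with (2 * S k)%nat by lia.
  rewrite dpt_double, (proj1 f_mid) by exact Hk. field.
Qed.

Hypothesis h_le : forall n, Rabs (h n) <= sigma n.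

(* |incr| <= |incr_prev|/2 + sigma n <= 4 sigma n, and 4 sigma n = 4 sqrt 2 sigma (S n). *)
Lemma incr_bound n k : (k < 2 ^ n)%nat -> Rabs (incr f n k) <= 6 * sigma n.
Proof.
  revert k. induction n as [|n IH]; intros k Hk.
  - replace k with 0%nat by (simpl in Hk; lia).
    unfold incr. rewrite (proj2 f_mid), Rminus_diag, Rabs_R0.
    pose proof (sigma_pos 0). lra.
  - assert (Hsig : 4 * sigma n <= 6 * sigma (S n)).
    { pose proof (sigma_pos (S n)). pose proof (pow2_pos n).
      assert (Hsq : sigma n * sigma n = 2 * (sigma (S n) * sigma (S n))).
      { rewrite !sigma_sq. simpl pow. field. lra. }
      pose proof (sigma_pos n). nra. }
    destruct (halve_lt k (2 ^ n) Hk) as [j [Hj [-> | ->]]];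
      [rewrite incr_even by exact Hj | rewrite incr_odd by exact Hj];
      pose proof (IH j Hj) as IHj; pose proof (h_le n) as Hh; revert IHj Hh;
      unfold Rabs; repeat destruct (Rcase_abs _); lra.
Qed.

End Increments.

Definition cov_prefix (f g : R -> R) (n K : nat) : R :=
  psum (fun k => incr f n k * incr g n k) K.

Lemma psum_filter_down_closed (P : nat -> Prop) (P_dec : forall k, {P k} + {~ P k})
    (a : nat -> R) N :
  (forall i j, (i <= j)%nat -> P j -> P i) ->
  exists K, (K <= S N)%nat /\
    psum (fun k => if P_dec k then a k else 0) (S N) = psum a K /\
    (forall k, (k < K)%nat -> P k) /\ (forall k, (K <= k <= N)%nat -> ~ P k).
Proof.
  intro P_down. induction N as [|N IH].
  - simpl psum. destruct (P_dec 0%nat) as [p|p].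
    + exists 1%nat. refine (conj _ (conj _ (conj _ _))); [lia|simpl; ring| |lia].
      intros k Hk. replace k with 0%nat by lia. exact p.
    + exists 0%nat. refine (conj _ (conj _ (conj _ _))); [lia|simpl; ring|lia|].
      intros k Hk. replace k with 0%nat by lia. exact p.
  - destruct IH as [K [HK [Hsum [Hin Hout]]]].
    rewrite psum_S, Hsum. destruct (P_dec (S N)) as [p|p].
    + assert (K = S N) as ->.
      { destruct (Nat.eq_dec K (S N)) as [E|E]; [exact E|].
        exfalso. apply (Hout N); [lia|]. apply (P_down N (S N)); [lia|exact p]. }
      exists (S (S N)). refine (conj _ (conj _ (conj _ _))); [lia|reflexivity| |lia].
      intros k Hk. destruct (Nat.eq_dec k (S N)) as [->|]; [exact p|]. apply Hin; lia.
    + exists K. refine (conj _ (conj _ (conj _ _))); [lia|ring|exact Hin|].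
      intros k Hk. destruct (Nat.eq_dec k (S N)) as [->|]; [exact p|]. apply Hout; lia.
Qed.

(* The points of T_n that are [<= t] form an initial segment k < K, and the
   term of index [2^n] vanishes because [1' = 1]. *)
Lemma qcov_eq_cov_prefix f g n t : 0 <= t <= 1 ->
  exists K, (K <= 2 ^ n)%nat /\ qcov n f g t = cov_prefix f g n K /\
    Rabs (INR K / 2 ^ n - t) <= / 2 ^ n.
Proof.
  intro Ht. pose proof (pow2_pos n) as Hp.
  unfold qcov. rewrite sum_f_R0_psum.
  set (T := fun k => (f (dsucc n k) - f (dpt n k)) * (g (dsucc n k) - g (dpt n k))).
  destruct (psum_filter_down_closed (fun k => dpt n k <= t)
              (fun k => Rle_dec (dpt n k) t) T (2 ^ n)) as [K [HK [Hsum [Hin Hout]]]].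
  { intros i j Hij Hj. eapply Rle_trans; [|exact Hj]. unfold dpt, Rdiv.
    apply Rmult_le_compat_r, le_INR, Hij. left; apply Rinv_0_lt_compat, Hp. }
  unfold T in Hsum; rewrite Hsum; fold T.
  assert (HT : forall k, (k < 2 ^ n)%nat -> T k = incr f n k * incr g n k).
  { intros k Hk. unfold T, incr, dsucc. rewrite Nat.min_l by lia. reflexivity. }
  destruct (Nat.eq_dec K (S (2 ^ n))) as [->|HK'].
  - exists (2 ^ n)%nat. split; [lia|]. split.
    + rewrite psum_S.
      replace (T (2 ^ n)%nat) with 0
        by (unfold T, dsucc, dpt; rewrite Nat.min_r by lia; ring).
      rewrite Rplus_0_r. apply psum_ext. intros; apply HT; assumption.
    + assert (H1 := Hin (2 ^ n)%nat ltac:(lia)). unfold dpt in H1.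
      rewrite pow_INR in *. replace (INR 2) with 2 in * by (simpl; lra).
      unfold Rdiv in *. rewrite Rinv_r in * by lra.
      replace (1 - t) with 0 by lra. rewrite Rabs_R0.
      left; apply Rinv_0_lt_compat, Hp.
  - exists K. split; [lia|]. split.
    + apply psum_ext. intros k Hk. apply HT. lia.
    + assert (K0 : K <> 0%nat).
      { intros ->. apply (Hout 0%nat); [lia|]. unfold dpt. simpl. lra. }
      assert (Hlow := Hin (K - 1)%nat ltac:(lia)).
      assert (Hhigh := Hout K ltac:(lia)).
      unfold dpt in Hlow, Hhigh. rewrite minus_INR in Hlow by lia. simpl INR in Hlow.
      assert (E : (INR K - 1) / 2 ^ n = INR K / 2 ^ n - / 2 ^ n) by (field; lra).
      rewrite E in Hlow. unfold Rabs. destruct (Rcase_abs _); lra.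
Qed.

Fixpoint halving_sum (a : nat -> R) (n : nat) : R :=
  match n with O => 0 | S n => halving_sum a n / 2 + a n end.

Lemma halving_sum_S a n : halving_sum a (S n) = halving_sum a n / 2 + a n.
Proof. reflexivity. Qed.

Lemma halving_sum_bound a : (forall n, Rabs (a n) <= 2) -> forall n, Rabs (halving_sum a n) <= 4.
Proof.
  intros Ha n. induction n as [|n IH]; simpl.
  - rewrite Rabs_R0. lra.
  - pose proof (Ha n) as Han. revert IH Han. unfold Rabs. repeat destruct (Rcase_abs _); lra.
Qed.

(* For functions with midpoint defects [h] and [h'], [cov_level h h' n] is
   their covariation along T_n over all of [0, 1]. *)
Definition cov_level (h h' : nat -> R) : nat -> R :=
  halving_sum (fun m => 2 ^ S m * h m * h' m).

Lemma inv_pow2_le_pow n : / 2 ^ n <= (3/4) ^ n.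
Proof. rewrite <- pow_inv. apply pow_incr. lra. Qed.

Lemma pow_le_pow_le_1 x m n : 0 <= x <= 1 -> (n <= m)%nat -> x ^ m <= x ^ n.
Proof.
  intros Hx Hnm. replace m with ((m - n) + n)%nat by lia. rewrite pow_add.
  assert (0 <= x ^ n) by (apply pow_le; lra).
  assert (x ^ (m - n) <= 1) by (rewrite <- (pow1 (m - n)); apply pow_incr; lra).
  assert (0 <= x ^ (m - n)) by (apply pow_le; lra).
  nra.
Qed.

Section Covariation.

Variables (f g : R -> R) (h h' : nat -> R).
Hypotheses (f_mid : dyadic_midpoint_law f h) (g_mid : dyadic_midpoint_law g h').
Hypotheses (h_le : forall n, Rabs (h n) <= sigma n) (h'_le : forall n, Rabs (h' n) <= sigma n).

Lemma cov_prefix_double n J : (J <= 2 ^ n)%nat ->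
  cov_prefix f g (S n) (2 * J) = cov_prefix f g n J / 2 + 2 * INR J * h n * h' n.
Proof.
  induction J as [|J IH]; intro HJ; unfold cov_prefix in *.
  - simpl. field.
  - replace (2 * S J)%nat with (S (S (2 * J))) by lia.
    rewrite !psum_S, IH by lia. replace (S (2 * J)) with (2 * J + 1)%nat by lia.
    rewrite (incr_even f h), (incr_even g h'), (incr_odd f h), (incr_odd g h')
      by (auto; lia).
    rewrite S_INR. field.
Qed.

Lemma cov_rate_bound n : Rabs (2 ^ S n * h n * h' n) <= 2.
Proof.
  rewrite !Rabs_mult, (Rabs_pos_eq (2 ^ S n)) by (left; apply pow2_pos).
  assert (Hhh : Rabs (h n) * Rabs (h' n) <= / 2 ^ n).
  { rewrite <- sigma_sq. apply Rmult_le_compat; auto using Rabs_pos. }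
  replace 2 with (2 ^ S n * / 2 ^ n) at 2 by (simpl; field; apply Rgt_not_eq, pow2_pos).
  rewrite Rmult_assoc. apply Rmult_le_compat_l; [left; apply pow2_pos|exact Hhh].
Qed.

Let cov_error n K := cov_prefix f g n K - INR K * cov_level h h' n / 2 ^ n.

Lemma cov_error_even n J : (J <= 2 ^ n)%nat ->
  cov_error (S n) (2 * J) = cov_error n J / 2.
Proof.
  intro HJ. unfold cov_error, cov_level. rewrite cov_prefix_double by exact HJ.
  simpl halving_sum. rewrite mult_INR. simpl pow. simpl INR.
  pose proof (pow2_pos n). field. lra.
Qed.

Lemma cov_error_odd n J : (J < 2 ^ n)%nat ->
  cov_error (S n) (2 * J + 1) = cov_error n J / 2
    + incr f (S n) (2 * J) * incr g (S n) (2 * J) - cov_level h h' (S n) / 2 ^ S n.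
Proof.
  intro HJ. rewrite <- (Rplus_0_r (cov_error n J / 2)), <- (cov_error_even n J) by lia.
  unfold cov_error. replace (2 * J + 1)%nat with (S (2 * J)) by lia.
  unfold cov_prefix at 1. rewrite psum_S. fold (cov_prefix f g (S n) (2 * J)).
  rewrite S_INR. field. apply Rgt_not_eq, pow2_pos.
Qed.

(* Each odd step adds at most 36 / 2^(n+1) (product of increments) plus
   4 / 2^(n+1) (the linear term), and halves the previous error. *)
Lemma cov_error_bound n K : (K <= 2 ^ n)%nat -> Rabs (cov_error n K) <= 80 * (3/4) ^ n.
Proof.
  revert K. induction n as [|n IH]; intros K HK.
  - assert (K = 0 \/ K = 1)%nat as [-> | ->] by (simpl in HK; lia);
      unfold cov_error, cov_prefix, cov_level; simpl;
      [|unfold incr; rewrite (proj2 f_mid)]; rewrite Rabs_pos_eq; lra.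
  - pose proof (pow2_pos n). pose proof (inv_pow2_le_pow n).
    assert (0 < (3/4) ^ n) by (apply pow_lt; lra).
    change ((3/4) ^ S n) with (3/4 * (3/4) ^ n).
    destruct (halve_le K (2 ^ n) HK) as [J [[-> HJ] | [-> HJ]]].
    + rewrite cov_error_even by exact HJ. pose proof (IH J HJ) as IHJ.
      revert IHJ. unfold Rabs. repeat destruct (Rcase_abs _); lra.
    + rewrite cov_error_odd by exact HJ. pose proof (IH J ltac:(lia)) as IHJ.
      assert (Hf := incr_bound f h f_mid h_le (S n) (2 * J) ltac:(simpl; lia)).
      assert (Hg := incr_bound g h' g_mid h'_le (S n) (2 * J) ltac:(simpl; lia)).
      assert (Hpow : / 2 ^ S n = / 2 ^ n / 2) by (simpl; field; lra).
      assert (Hfg : Rabs (incr f (S n) (2 * J) * incr g (S n) (2 * J)) <= 18 * / 2 ^ n).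
      { rewrite Rabs_mult.
        replace (18 * / 2 ^ n) with (36 * / 2 ^ S n) by (rewrite Hpow; field; lra).
        rewrite <- sigma_sq.
        pose proof (Rabs_pos (incr f (S n) (2 * J))).
        pose proof (Rabs_pos (incr g (S n) (2 * J))).
        pose proof (sigma_pos (S n)). nra. }
      assert (Hlin : Rabs (cov_level h h' (S n) / 2 ^ S n) <= 2 * / 2 ^ n).
      { unfold Rdiv. rewrite Rabs_mult, (Rabs_pos_eq (/ _))
          by (left; apply Rinv_0_lt_compat, pow2_pos).
        replace (2 * / 2 ^ n) with (4 * / 2 ^ S n) by (rewrite Hpow; field; lra).
        apply Rmult_le_compat_r; [left; apply Rinv_0_lt_compat, pow2_pos|].
        apply halving_sum_bound, cov_rate_bound. }
      revert IHJ Hfg Hlin.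
      set (b := incr f (S n) (2 * J) * incr g (S n) (2 * J)).
      set (c := cov_level h h' (S n) / 2 ^ S n).
      unfold Rabs. repeat destruct (Rcase_abs _); lra.
Qed.

Lemma qcov_approx n t : 0 <= t <= 1 ->
  Rabs (qcov n f g t - t * cov_level h h' n) <= 84 * (3/4) ^ n.
Proof.
  intro Ht. destruct (qcov_eq_cov_prefix f g n t Ht) as [K [HK [-> Hdist]]].
  pose proof (cov_error_bound n K HK) as Herr. unfold cov_error in Herr.
  assert (Hv : Rabs (cov_level h h' n) <= 4)
    by (apply halving_sum_bound, cov_rate_bound).
  pose proof (pow2_pos n). pose proof (inv_pow2_le_pow n).
  replace (cov_prefix f g n K - t * cov_level h h' n) with
    ((cov_prefix f g n K - INR K * cov_level h h' n / 2 ^ n)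
     + (INR K / 2 ^ n - t) * cov_level h h' n) by (field; lra).
  eapply Rle_trans; [apply Rabs_triang|]. rewrite Rabs_mult.
  assert (Rabs (INR K / 2 ^ n - t) * Rabs (cov_level h h' n) <= / 2 ^ n * 4)
    by (apply Rmult_le_compat; auto using Rabs_pos).
  lra.
Qed.

Lemma qcov_limit_along (p : nat -> nat) (L t : R) : (forall n, (n <= p n)%nat) ->
  is_lim_seq (fun n => cov_level h h' (p n)) L -> 0 <= t <= 1 ->
  is_lim_seq (fun n => qcov (p n) f g t) (t * L).
Proof.
  intros Hp HL Ht.
  assert (Hgeom : forall c, is_lim_seq (fun n => c * (3/4) ^ n) 0).
  { intro c. replace 0 with (c * 0) by ring.
    apply (is_lim_seq_scal_l _ c (Finite 0)), is_lim_seq_geom.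
    rewrite Rabs_pos_eq; lra. }
  apply is_lim_seq_ext with (fun n => t * cov_level h h' (p n)
                                      + (qcov (p n) f g t - t * cov_level h h' (p n))).
  { intro n. ring. }
  replace (t * L) with (t * L + 0) by ring.
  apply is_lim_seq_plus'; [apply (is_lim_seq_scal_l _ t (Finite L)), HL|].
  apply is_lim_seq_le_le with (fun n => -84 * (3/4) ^ n) (fun n => 84 * (3/4) ^ n);
    [|apply Hgeom|apply Hgeom].
  intro n. pose proof (qcov_approx (p n) t Ht) as Happrox.
  pose proof (pow_le_pow_le_1 (3/4) (p n) n ltac:(lra) (Hp n)).
  apply Rabs_le_between in Happrox. lra.
Qed.

End Covariation.

Lemma halving_sum_two_periodic_even a alpha beta :
  (forall j, a (2 * j)%nat = alpha) -> (forall j, a (2 * j + 1)%nat = beta) ->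
  forall N, halving_sum a (2 * N) = (2 * alpha + 4 * beta) / 3 * (1 - (1/4) ^ N).
Proof.
  intros Ha Hb N. induction N as [|N IH]; [simpl; field|].
  replace (2 * S N)%nat with (S (2 * N + 1)) by lia.
  rewrite halving_sum_S, Hb, Nat.add_1_r, halving_sum_S, IH, Ha.
  simpl pow. field.
Qed.

Lemma halving_sum_two_periodic_limits a alpha beta :
  (forall j, a (2 * j)%nat = alpha) -> (forall j, a (2 * j + 1)%nat = beta) ->
  is_lim_seq (fun N => halving_sum a (2 * N)) ((2 * alpha + 4 * beta) / 3) /\
  is_lim_seq (fun N => halving_sum a (2 * N + 1)) ((2 * alpha + 4 * beta) / 3 / 2 + alpha).
Proof.
  intros Ha Hb.
  assert (Heven : is_lim_seq (fun N => halving_sum a (2 * N)) ((2 * alpha + 4 * beta) / 3)).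
  { rewrite <- (Rmult_1_r ((2 * alpha + 4 * beta) / 3)), <- (Rminus_0_r 1).
    apply is_lim_seq_ext with (fun N => (2 * alpha + 4 * beta) / 3 * (1 - (1/4) ^ N)).
    { intro N. symmetry. apply (halving_sum_two_periodic_even a alpha beta Ha Hb). }
    apply (is_lim_seq_scal_l _ _ (Finite (1 - 0))), (is_lim_seq_minus' _ _ 1 0);
      [apply is_lim_seq_const|apply is_lim_seq_geom; rewrite Rabs_pos_eq; lra]. }
  split; [exact Heven|].
  apply is_lim_seq_ext with (fun N => / 2 * halving_sum a (2 * N) + alpha).
  { intro N. rewrite Nat.add_1_r, halving_sum_S, Ha. field. }
  replace ((2 * alpha + 4 * beta) / 3 / 2) with (/ 2 * ((2 * alpha + 4 * beta) / 3))
    by field.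
  apply is_lim_seq_plus'; [|apply is_lim_seq_const].
  apply (is_lim_seq_scal_l _ _ (Finite _)), Heven.
Qed.

Lemma schauder_defect_le (d : nat -> R) n :
  Rabs (d n) <= 2 -> Rabs (schauder_defect d n) <= sigma n.
Proof.
  intro Hd. unfold schauder_defect, Rdiv. pose proof (sigma_pos n).
  rewrite !Rabs_mult, (Rabs_pos_eq (sigma n)), (Rabs_pos_eq (/ 2)) by lra. nra.
Qed.

Section SchauderCovariation.

Variables (f g : R -> R) (c c' : nat -> R).
Hypotheses (f_mid : dyadic_midpoint_law f (schauder_defect c))
           (g_mid : dyadic_midpoint_law g (schauder_defect c')).
Hypotheses (c_le : forall n, Rabs (c n) <= 2) (c'_le : forall n, Rabs (c' n) <= 2).
Variables alpha beta : R.
Hypotheses (cc_even : forall j, c (2 * j)%nat * c' (2 * j)%nat = alpha)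
           (cc_odd : forall j, c (2 * j + 1)%nat * c' (2 * j + 1)%nat = beta).

Lemma schauder_cov_rate n :
  2 ^ S n * schauder_defect c n * schauder_defect c' n = c n * c' n / 2.
Proof.
  unfold schauder_defect.
  replace (2 ^ S n * (c n * sigma n / 2) * (c' n * sigma n / 2))
    with (2 ^ S n * (sigma n * sigma n) * (c n * c' n) / 4) by field.
  rewrite sigma_sq. pose proof (pow2_pos n). simpl pow. field. lra.
Qed.

Lemma schauder_qcov_limits t : 0 <= t <= 1 ->
  is_lim_seq (fun n => qcov (2 * n) f g t) (t * ((alpha + 2 * beta) / 3)) /\
  is_lim_seq (fun n => qcov (2 * n + 1) f g t) (t * ((alpha + 2 * beta) / 6 + alpha / 2)).
Proof.
  intro Ht.
  destruct (halving_sum_two_periodic_limits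
              (fun m => 2 ^ S m * schauder_defect c m * schauder_defect c' m)
              (alpha / 2) (beta / 2)) as [Heven Hodd].
  { intro j. rewrite schauder_cov_rate, cc_even. reflexivity. }
  { intro j. rewrite schauder_cov_rate, cc_odd. reflexivity. }
  assert (Hlim := qcov_limit_along f g _ _ f_mid g_mid
                    (fun n => schauder_defect_le c n (c_le n))
                    (fun n => schauder_defect_le c' n (c'_le n))).
  split.
  - replace ((alpha + 2 * beta) / 3) with ((2 * (alpha / 2) + 4 * (beta / 2)) / 3) by field.
    apply Hlim; [intro; lia|exact Heven|exact Ht].
  - replace ((alpha + 2 * beta) / 6 + alpha / 2)
      with ((2 * (alpha / 2) + 4 * (beta / 2)) / 3 / 2 + alpha / 2) by field.
    apply Hlim; [intro; lia|exact Hodd|exact Ht].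
Qed.

End SchauderCovariation.

Lemma xhat_schauder t : xhat t = schauder (fun _ => 1) t.
Proof. apply Series_ext. intro m. apply sum_eq. intros. ring. Qed.

Lemma yfun_schauder t : yfun t = schauder (fun m => (-1) ^ m) t.
Proof. apply Series_ext. intro m. apply sum_eq. intros. reflexivity. Qed.

Lemma xhat_midpoint_law : dyadic_midpoint_law xhat (schauder_defect (fun _ => 1)).
Proof.
  refine (dyadic_midpoint_law_ext _ _ _ _ _ (fun _ => eq_refl) (schauder_midpoint_law _)).
  intro t. symmetry. apply xhat_schauder.
Qed.

Lemma yfun_midpoint_law : dyadic_midpoint_law yfun (schauder_defect (fun m => (-1) ^ m)).
Proof.
  refine (dyadic_midpoint_law_ext _ _ _ _ _ (fun _ => eq_refl) (schauder_midpoint_law _)).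
  intro t. symmetry. apply yfun_schauder.
Qed.

Lemma xhat_plus_yfun_midpoint_law :
  dyadic_midpoint_law (fun t => xhat t + yfun t) (schauder_defect (fun m => 1 + (-1) ^ m)).
Proof.
  eapply dyadic_midpoint_law_ext;
    [reflexivity| |apply (dyadic_midpoint_law_add _ _ _ _ xhat_midpoint_law yfun_midpoint_law)].
  intro n. unfold schauder_defect. field.
Qed.

Lemma qv_xhat_plus_yfun_limits t : 0 <= t <= 1 ->
  is_lim_seq (fun n => qv (2 * n) (fun t => xhat t + yfun t) t) (4 / 3 * t) /\
  is_lim_seq (fun n => qv (2 * n + 1) (fun t => xhat t + yfun t) t) (8 / 3 * t).
Proof.
  intro Ht.
  assert (Hc : forall n, Rabs (1 + (-1) ^ n) <= 2).
  { intro n. eapply Rle_trans; [apply Rabs_triang|]. rewrite Rabs_R1, pow_1_abs. lra. }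
  destruct (schauder_qcov_limits _ _ _ _ xhat_plus_yfun_midpoint_law
              xhat_plus_yfun_midpoint_law Hc Hc 4 0) with (t := t)
    as [Heven Hodd]; [intro j; rewrite pow_1_even; ring
                     |intro j; rewrite Nat.add_1_r, pow_1_odd; ring|exact Ht|].
  split; [replace (4 / 3 * t) with (t * ((4 + 2 * 0) / 3)) by field
         |replace (8 / 3 * t) with (t * ((4 + 2 * 0) / 6 + 4 / 2)) by field]; assumption.
Qed.

Lemma qcov_xhat_yfun_limits t : 0 <= t <= 1 ->
  is_lim_seq (fun n => qcov (2 * n) xhat yfun t) (- (1 / 3) * t) /\
  is_lim_seq (fun n => qcov (2 * n + 1) xhat yfun t) (1 / 3 * t).
Proof.
  intro Ht.
  assert (Hx : forall n : nat, Rabs 1 <= 2) by (intro; rewrite Rabs_R1; lra).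
  assert (Hy : forall n, Rabs ((-1) ^ n) <= 2) by (intro; rewrite pow_1_abs; lra).
  destruct (schauder_qcov_limits _ _ _ _ xhat_midpoint_law yfun_midpoint_law Hx Hy 1 (-1))
    with (t := t) as [Heven Hodd]; [intro j; rewrite pow_1_even; ring
                                   |intro j; rewrite Nat.add_1_r, pow_1_odd; ring|exact Ht|].
  split; [replace (- (1 / 3) * t) with (t * ((1 + 2 * -1) / 3)) by field
         |replace (1 / 3 * t) with (t * ((1 + 2 * -1) / 6 + 1 / 2)) by field]; assumption.
Qed.

Lemma not_ex_lim_seq_even_odd (u : nat -> R) (l1 l2 : R) :
  is_lim_seq (fun n => u (2 * n)%nat) l1 -> is_lim_seq (fun n => u (2 * n + 1)%nat) l2 ->
  l1 <> l2 -> ~ ex_lim_seq u.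
Proof.
  intros Heven Hodd Hne [l Hl].
  assert (Heven' := is_lim_seq_subseq u l _
                      (eventually_subseq (fun n => 2 * n)%nat ltac:(intro; cbv beta; lia)) Hl).
  assert (Hodd' := is_lim_seq_subseq u l _
                     (eventually_subseq (fun n => 2 * n + 1)%nat ltac:(intro; cbv beta; lia)) Hl).
  apply Hne. apply Rbar_finite_eq.
  rewrite <- (is_lim_seq_unique _ _ Heven), <- (is_lim_seq_unique _ _ Hodd),
    (is_lim_seq_unique _ _ Heven'), (is_lim_seq_unique _ _ Hodd').
  reflexivity.
Qed.

Lemma scale_continuous (c t eps : R) : 0 < eps -> exists delta, 0 < delta /\
  forall u, 0 <= u <= 1 -> Rabs (u - t) < delta -> Rabs (c * u - c * t) < eps.
Proof.
  intro Heps. exists (eps / (Rabs c + 1)).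
  pose proof (Rabs_pos c). split; [apply Rdiv_lt_0_compat; lra|].
  intros u _ Hu. rewrite <- Rmult_minus_distr_l, Rabs_mult.
  apply Rlt_div_r in Hu; [|lra].
  pose proof (Rabs_pos (u - t)). nra.
Qed.

Theorem proposition2p7 :
  let s := fun t => xhat t + yfun t in
  (forall t, 0 <= t <= 1 ->
     is_lim_seq (fun n => qv (2 * n) s t) (4 / 3 * t) /\
     is_lim_seq (fun n => qv (2 * n + 1) s t) (8 / 3 * t) /\
     is_lim_seq (fun n => qcov (2 * n) xhat yfun t) (- (1 / 3) * t) /\
     is_lim_seq (fun n => qcov (2 * n + 1) xhat yfun t) (1 / 3 * t)) /\
  (forall t, 0 < t <= 1 ->
     ~ ex_lim_seq (fun n => qv n s t) /\
     ~ ex_lim_seq (fun n => qcov n xhat yfun t)) /\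
  (exists A1 A2 : R -> R,
     admits_cqv_along (fun n => 2 * n)%nat s A1 /\
     admits_cqv_along (fun n => 2 * n + 1)%nat s A2 /\
     (forall t, 0 < t <= 1 -> A1 t <> A2 t)).
Proof.
  intro s. split; [|split].
  - intros t Ht. pose proof (qv_xhat_plus_yfun_limits t Ht).
    pose proof (qcov_xhat_yfun_limits t Ht). tauto.
  - intros t Ht.
    destruct (qv_xhat_plus_yfun_limits t ltac:(lra)) as [Hs_even Hs_odd].
    destruct (qcov_xhat_yfun_limits t ltac:(lra)) as [Hxy_even Hxy_odd].
    split; [eapply not_ex_lim_seq_even_odd; [exact Hs_even|exact Hs_odd|]
           |eapply not_ex_lim_seq_even_odd; [exact Hxy_even|exact Hxy_odd|]]; lra.
  - exists (fun t => 4 / 3 * t), (fun t => 8 / 3 * t). repeat split.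
    + intros t Ht. apply (qv_xhat_plus_yfun_limits t Ht).
    + intros t _ eps. apply scale_continuous.
    + intros t Ht. apply (qv_xhat_plus_yfun_limits t Ht).
    + intros t _ eps. apply scale_continuous.
    + intros t Ht. lra.
Qed.
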